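(* Let $\mathbf{A},\mathbf{B}\in\mathbb{C}$ be constants and let $\vartheta_2,\vartheta_3,\vartheta_4,\eta$ be (nonvanishing $\vartheta_2$) solutions of $$\frac{d\vartheta_2}{d\tau}=\frac{i}{\pi}\Big\{\eta+\frac{\pi^2}{12}(\vartheta_3^4+\vartheta_4^4)\Big\}\vartheta_2,\quad \frac{d\vartheta_3}{d\tau}=\frac{i}{\pi}\Big\{\eta+\frac{\pi^2}{12}(\vartheta_3^4+\vartheta_4^4-3\mathbf{B}^4\vartheta_4^4)\Big\}\vartheta_3,$$ $$\frac{d\vartheta_4}{d\tau}=\frac{i}{\pi}\Big\{\eta+\frac{\pi^2}{12}(\vartheta_3^4+\vartheta_4^4-3\mathbf{A}^4\vartheta_3^4)\Big\}\vartheta_4,\quad \frac{d\eta}{d\tau}=\frac{i}{\pi}2\eta^2-\frac{\pi^3}{72}i\big\{\vartheta_3^8+(9\mathbf{A}^4\mathbf{B}^4-6\mathbf{A}^4-6\mathbf{B}^4+2)\vartheta_3^4\vartheta_4^4+\vartheta_4^8\big\}.$$ Then the quantity $\mathfrak{A}^4$ defined by $\mathfrak{A}^4\vartheta_2^4=\mathbf{A}^4\vartheta_3^4-\mathbf{B}^4\vartheta_4^4$ satisfies $\frac{d}{d\tau}\mathfrak{A}^4\equiv0$, i.e. it is a rational first integral of this system. *)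

From Stdlib Require Import Reals.
From Coquelicot Require Import Coquelicot.
Open Scope C_scope.

Definition Cderiv_is (f : C -> C) (z l : C) : Prop :=
  @is_derive C_AbsRing C_NormedModule f z l.

Definition piC : C := RtoC PI.

Definition frakA4 (A B : C) (th2 th3 th4 : C -> C) (t : C) : C :=
  (A ^ 4 * th3 t ^ 4 - B ^ 4 * th4 t ^ 4) / th2 t ^ 4.

From Stdlib Require Import Reals Lra.
From Coquelicot Require Import Coquelicot.
Open Scope C_scope.

(* Each theta_j satisfies theta_j' = a_j theta_j, hence (theta_j^4)' = 4 a_j theta_j^4.
   The corrections -3B^4 theta_4^4 in a_3 and -3A^4 theta_3^4 in a_4 cancel in
   (A^4 theta_3^4 - B^4 theta_4^4)' = A^4 4 a_3 theta_3^4 - B^4 4 a_4 theta_4^4, so the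
   numerator of frakA4 has the same logarithmic derivative 4 a_2 as its denominator
   theta_2^4, and the quotient is stationary. *)

(* Coquelicot's product and chain rules are stated in [AbsRing_NormedModule C_AbsRing],
   whereas [Cderiv_is] uses [C_NormedModule]; both have norm [Cmod], so the remainder
   estimates coincide and only linearity of the differential must be re-established. *)
Lemma Cderiv_is_iff (f : C -> C) (z l : C) :
  Cderiv_is f z l <-> @is_derive C_AbsRing (AbsRing_NormedModule C_AbsRing) f z l.
Proof.
  split; intros [_ Hrem]; split; [apply is_linear_scal_l | exact Hrem
                                 | apply is_linear_scal_l | exact Hrem].
Qed.

Lemma Cinv_remainder_le (y z : C) (eps : R) :
  (0 <= eps)%R -> z <> 0 -> (Cmod (y - z) <= Cmod z / 2)%R ->
  (Cmod (y - z) <= eps * Cmod z ^ 3 / 2)%R ->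
  (Cmod ((/ y - / z) - (y - z) * (- / (z * z))) <= eps * Cmod (y - z))%R.
Proof.
  intros Heps Hz Hnear Hsmall.
  assert (Hr : (0 < Cmod z)%R) by (apply Cmod_gt_0; exact Hz).
  assert (Hy : (Cmod z / 2 <= Cmod y)%R).
  { assert (Htri : (Cmod z <= Cmod y + Cmod (y - z))%R).
    { replace z with (y - (y - z)) at 1 by ring.
      rewrite <- (Cmod_opp (y - z)). apply Cmod_triangle. }
    lra. }
  assert (Hy0 : y <> 0) by (intro E; subst y; rewrite Cmod_0 in Hy; lra).
  replace ((/ y - / z) - (y - z) * (- / (z * z)))
    with ((y - z) * (y - z) / (y * (z * z))) by (field; auto).
  unfold Cdiv.
  rewrite Cmod_mult, Cmod_inv by (repeat apply Cmult_neq_0; auto).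
  rewrite !Cmod_mult.
  set (a := Cmod (y - z)) in *; set (r := Cmod z) in *; set (m := Cmod y) in *.
  assert (Ha : (0 <= a)%R) by apply Cmod_ge_0.
  assert (Hm : (0 < m)%R) by lra.
  apply (Rmult_le_reg_r (m * (r * r))); [repeat apply Rmult_lt_0_compat; lra|].
  replace (a * a * / (m * (r * r)) * (m * (r * r)))%R with (a * a)%R
    by (field; split; lra).
  simpl in Hsmall.
  assert (Hrm : (r * (r * (r * 1)) / 2 <= m * (r * r))%R).
  { replace (r * (r * (r * 1)) / 2)%R with (r / 2 * (r * r))%R by field.
    apply Rmult_le_compat_r; nra. }
  assert (Hbound : (a <= eps * (m * (r * r)))%R).
  { apply Rle_trans with (1 := Hsmall). unfold Rdiv.
    rewrite Rmult_assoc. apply Rmult_le_compat_l; lra. }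
  nra.
Qed.

Lemma Cderiv_Cinv (z : C) : z <> 0 -> Cderiv_is Cinv z (- / (z * z)).
Proof.
  intros Hz. apply Cderiv_is_iff. split; [apply is_linear_scal_l|].
  intros x Hx.
  apply (@is_filter_lim_locally_unique _ (AbsRing_NormedModule C_AbsRing)) in Hx.
  subst x. intros eps.
  apply (@locally_le_locally_norm C_AbsRing (AbsRing_NormedModule C_AbsRing)).
  assert (Hr : (0 < Cmod z)%R) by (apply Cmod_gt_0; exact Hz).
  assert (Hd : (0 < Rmin (Cmod z / 2) (eps * Cmod z ^ 3 / 2))%R).
  { pose proof (cond_pos eps). apply Rmin_glb_lt; [lra|].
    pose proof (pow_lt _ 3 Hr). nra. }
  exists (mkposreal _ Hd). intros y Hy.
  change (Cmod (y - z) < Rmin (Cmod z / 2) (eps * Cmod z ^ 3 / 2))%R in Hy.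
  pose proof (cond_pos eps).
  apply Cinv_remainder_le; [lra | exact Hz | |];
    [pose proof (Rmin_l (Cmod z / 2) (eps * Cmod z ^ 3 / 2))
    |pose proof (Rmin_r (Cmod z / 2) (eps * Cmod z ^ 3 / 2))]; lra.
Qed.

Lemma Cderiv_const (c z : C) : Cderiv_is (fun _ => c) z 0.
Proof. exact (@is_derive_const C_AbsRing C_NormedModule c z). Qed.

Lemma Cderiv_minus (f g : C -> C) (z df dg : C) :
  Cderiv_is f z df -> Cderiv_is g z dg -> Cderiv_is (fun x => f x - g x) z (df - dg).
Proof. exact (@is_derive_minus C_AbsRing C_NormedModule f g z df dg). Qed.

Lemma Cderiv_mult (f g : C -> C) (z df dg : C) :
  Cderiv_is f z df -> Cderiv_is g z dg ->
  Cderiv_is (fun x => f x * g x) z (df * g z + f z * dg).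
Proof.
  rewrite !Cderiv_is_iff. intros Hf Hg.
  apply (@is_derive_mult C_AbsRing f g z df dg Hf Hg Cmult_comm).
Qed.

Lemma Cderiv_inv (g : C -> C) (z dg : C) :
  g z <> 0 -> Cderiv_is g z dg -> Cderiv_is (fun x => / g x) z (- dg / (g z * g z)).
Proof.
  intros Hgz Hg. apply Cderiv_is_iff.
  replace (- dg / (g z * g z)) with (scal dg (- / (g z * g z)))
    by (unfold scal; simpl; unfold mult; simpl; unfold Cdiv; ring).
  apply (@is_derive_comp C_AbsRing (AbsRing_NormedModule C_AbsRing) Cinv g z).
  - apply Cderiv_is_iff, Cderiv_Cinv, Hgz.
  - apply Cderiv_is_iff, Hg.
Qed.

Lemma Cderiv_div (f g : C -> C) (z df dg : C) :
  g z <> 0 -> Cderiv_is f z df -> Cderiv_is g z dg ->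
  Cderiv_is (fun x => f x / g x) z ((df * g z - f z * dg) / (g z * g z)).
Proof.
  intros Hgz Hf Hg.
  replace ((df * g z - f z * dg) / (g z * g z))
    with (df * / g z + f z * (- dg / (g z * g z))) by (field; exact Hgz).
  exact (Cderiv_mult _ _ _ _ _ Hf (Cderiv_inv _ _ _ Hgz Hg)).
Qed.

Lemma Cderiv_pow (f : C -> C) (n : nat) (z df : C) :
  Cderiv_is f z df -> Cderiv_is (fun x => f x ^ n) z (INR n * df * f z ^ pred n).
Proof.
  intros Hf. induction n as [|n IH].
  - simpl. replace (RtoC 0 * df * 1) with (RtoC 0) by ring. apply Cderiv_const.
  - replace (INR (S n) * df * f z ^ pred (S n))
      with (df * f z ^ n + f z * (INR n * df * f z ^ pred n)).
    + exact (Cderiv_mult _ _ _ _ _ Hf IH).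
    + rewrite S_INR, RtoC_plus. destruct n as [|n]; simpl; ring.
Qed.

Lemma Cderiv_pow_of_logderiv (f : C -> C) (n : nat) (z a : C) :
  Cderiv_is f z (a * f z) -> Cderiv_is (fun x => f x ^ n) z (INR n * a * f z ^ n).
Proof.
  intros Hf. replace (INR n * a * f z ^ n) with (INR n * (a * f z) * f z ^ pred n).
  - exact (Cderiv_pow _ _ _ _ Hf).
  - destruct n as [|n]; simpl; ring.
Qed.

Lemma Cderiv_div_of_same_logderiv (f g : C -> C) (z k : C) :
  g z <> 0 -> Cderiv_is f z (k * f z) -> Cderiv_is g z (k * g z) ->
  Cderiv_is (fun x => f x / g x) z 0.
Proof.
  intros Hgz Hf Hg.
  assert (Hcancel : (k * f z * g z - f z * (k * g z)) / (g z * g z) = 0)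
    by (field; exact Hgz).
  rewrite <- Hcancel. exact (Cderiv_div _ _ _ _ _ Hgz Hf Hg).
Qed.

Theorem theorem7p2 (A B : C) (D : C -> Prop) (HD : open D)
  (th2 th3 th4 eta : C -> C)
  (Hth2 : forall t, D t -> th2 t <> 0)
  (H2 : forall t, D t -> Cderiv_is th2 t
     ((Ci / piC) * (eta t + piC ^ 2 / RtoC 12 * (th3 t ^ 4 + th4 t ^ 4)) * th2 t))
  (H3 : forall t, D t -> Cderiv_is th3 t
     ((Ci / piC) * (eta t + piC ^ 2 / RtoC 12 *
        (th3 t ^ 4 + th4 t ^ 4 - RtoC 3 * B ^ 4 * th4 t ^ 4)) * th3 t))
  (H4 : forall t, D t -> Cderiv_is th4 t
     ((Ci / piC) * (eta t + piC ^ 2 / RtoC 12 *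
        (th3 t ^ 4 + th4 t ^ 4 - RtoC 3 * A ^ 4 * th3 t ^ 4)) * th4 t))
  (Heta : forall t, D t -> Cderiv_is eta t
     ((Ci / piC) * RtoC 2 * eta t ^ 2
      - piC ^ 3 / RtoC 72 * Ci *
        (th3 t ^ 8
         + (RtoC 9 * A ^ 4 * B ^ 4 - RtoC 6 * A ^ 4 - RtoC 6 * B ^ 4 + RtoC 2)
             * th3 t ^ 4 * th4 t ^ 4
         + th4 t ^ 8))) :
  forall t, D t -> Cderiv_is (frakA4 A B th2 th3 th4) t 0.
Proof.
  intros t Ht.
  set (a := Ci / piC * (eta t + piC ^ 2 / RtoC 12 * (th3 t ^ 4 + th4 t ^ 4))).
  pose proof (Cderiv_pow_of_logderiv _ 4 _ _ (H2 t Ht)) as dth2.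
  pose proof (Cderiv_pow_of_logderiv _ 4 _ _ (H3 t Ht)) as dth3.
  pose proof (Cderiv_pow_of_logderiv _ 4 _ _ (H4 t Ht)) as dth4.
  assert (dnum : Cderiv_is (fun x => A ^ 4 * th3 x ^ 4 - B ^ 4 * th4 x ^ 4) t
                (INR 4 * a * (A ^ 4 * th3 t ^ 4 - B ^ 4 * th4 t ^ 4))).
  { refine (eq_ind _ _ (Cderiv_minus _ _ _ _ _
              (Cderiv_mult _ _ _ _ _ (Cderiv_const (A ^ 4) t) dth3)
              (Cderiv_mult _ _ _ _ _ (Cderiv_const (B ^ 4) t) dth4)) _ _).
    unfold a. ring. }
  exact (Cderiv_div_of_same_logderiv _ (fun x => th2 x ^ 4) t (INR 4 * a)
           (Cpow_nz _ 4 (Hth2 t Ht)) dnum dth2).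
Qed.
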